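(* Let $n\geq 3$, $k\in\mathbb{Z}_n$ with $k\neq 0$ and $2k\not\equiv 0\pmod n$, and let $C$ be a perfect code in $\mathrm{GP}(n,k)$. Then $|C\cap U|=|C\cap V|=\frac{n}{4}$; in particular $n\equiv 0\pmod 4$.
   Context: For an integer $n\geq 3$ and a nonzero $k\in\mathbb{Z}_n$, the generalized Petersen graph $\mathrm{GP}(n,k)$ is the simple graph with vertex set $\{u_i,v_i\mid i\in\mathbb{Z}_n\}$ and edges $u_iu_{i+1}$, $u_iv_i$, $v_iv_{i+k}$ for all $i\in\mathbb{Z}_n$ (indices modulo $n$). Let $U=\{u_i\mid i\in\mathbb{Z}_n\}$ and $V=\{v_i\mid i\in\mathbb{Z}_n\}$. A perfect code in a graph $\Gamma$ is an independent set $C\subseteq V(\Gamma)$ such that every vertex not in $C$ is adjacent to exactly one vertex of $C$. *)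

From mathcomp Require Import all_boot.
Set Implicit Arguments. Unset Strict Implicit. Unset Printing Implicit Defensive.

(* Vertices of GP(n,k): (false, i) = u_i, (true, i) = v_i, i : 'I_n = Z_n. *)
Definition gp_vertex (n : nat) := (bool * 'I_n)%type.

Definition step (n d : nat) (i j : 'I_n) : bool := (i + d) %% n == j.
Arguments step : clear implicits.

Definition gp_adj (n k : nat) (x y : gp_vertex n) : bool :=
  match x, y with
  | (false, i), (false, j) => step n 1 i j || step n 1 j i
  | (true, i), (true, j) => step n k i j || step n k j i
  | (false, i), (true, j) => i == j
  | (true, i), (false, j) => i == j
  end.

Arguments gp_adj : clear implicits.
Definition U (n : nat) : {set gp_vertex n} := [set x | ~~ x.1].
Definition V (n : nat) : {set gp_vertex n} := [set x | x.1].

Definition perfect_code (n k : nat) (C : {set gp_vertex n}) : Prop :=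
  (forall x y, x \in C -> y \in C -> ~~ gp_adj n k x y) /\
  (forall x, x \notin C -> #|[set y in C | gp_adj n k x y]| = 1).
Arguments perfect_code : clear implicits.

(* The closed neighbourhoods of the codewords partition the vertex set, so
   counting the outer vertices U and the inner vertices V by the codeword
   dominating them gives n = 3|C ∩ U| + |C ∩ V| and n = |C ∩ U| + 3|C ∩ V|:
   a codeword on one cycle dominates itself and its two cycle neighbours
   there (distinct because 2k ≢ 0 mod n), and exactly one vertex, its spoke
   partner, on the other cycle. *)

From mathcomp Require Import all_boot zify.

Set Implicit Arguments.
Unset Strict Implicit.
Unset Printing Implicit Defensive.

Lemma card_eq_sum_unique_rel (T : finType) (P : rel T) (C W : {set T}) :
  (forall x, #|[set c in C | P x c]| = 1) ->
  #|W| = \sum_(c in C) #|[set x in W | P x c]|.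
Proof.
have cardE (A : {set T}) (Q : pred T) : #|[set y in A | Q y]| = \sum_(y in A) Q y.
  rewrite -sum1_card (eq_bigl (fun y => (y \in A) && Q y)) => [|y]; last by rewrite !inE.
  by rewrite big_mkcondr; apply: eq_bigr => y _; case: (Q y).
move=> unique_c; rewrite -sum1_card.
under eq_bigr => x _ do rewrite -(unique_c x) cardE.
by rewrite exchange_big; apply: eq_bigr => c _; rewrite cardE.
Qed.

Lemma sum_if_in (T : finType) (A B : {set T}) (m p : nat) :
  \sum_(c in A) (if c \in B then m else p) = m * #|A :&: B| + p * #|A :\: B|.
Proof.
rewrite (bigID (mem B)) /=.
rewrite (eq_bigr (fun=> m)) => [|c /andP[_ ->]] //.
rewrite [X in _ + X](eq_bigr (fun=> p)) => [|c /andP[_ /negbTE ->]] //.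
rewrite !sum_nat_const !cardsE (mulnC m) (mulnC p); congr (_ * _ + _ * _).
by apply: eq_card => c; rewrite unfold_in andbC.
Qed.

Section CyclicShift.
Variables (n d : nat).

Definition zshift (j : 'I_n) : 'I_n :=
  Ordinal (ltn_pmod (j + d) (leq_ltn_trans (leq0n j) (ltn_ord j))).

Lemma step_zshift (i j : 'I_n) : step n d i j = (zshift i == j).
Proof. by []. Qed.

Lemma zshift_inj : injective zshift.
Proof.
move=> i j /(congr1 val) /= /eqP; rewrite eqn_modDr !modn_small //.
by move=> /eqP /val_inj.
Qed.

Lemma addn_mod_fixed (i : 'I_n) (x : nat) : ((i + x) %% n == i) = (x %% n == 0).
Proof.
by rewrite -[X in _ == X](modn_small (ltn_ord i)) -[X in _ == X %% n]addn0 eqn_modDl mod0n.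
Qed.

Lemma card_cyclic_closed_nbhd (i : 'I_n) : d %% n != 0 -> (2 * d) %% n != 0 ->
  #|[set j : 'I_n | (j == i) || step n d i j || step n d j i]| = 3.
Proof.
move=> d_ne0 d2_ne0.
have shiftK := canF_eq (invF_f zshift_inj).
have shift_ne i' : zshift i' != i' by rewrite -val_eqE /= addn_mod_fixed.
have shift2_ne : zshift (zshift i) != i.
  by rewrite -val_eqE /= modnDml -addnA addnn -mul2n addn_mod_fixed.
have -> : [set j | (j == i) || step n d i j || step n d j i]
          = [set i; zshift i; invF zshift_inj i].
  by apply/setP => j; rewrite !inE !step_zshift (eq_sym (zshift i)) shiftK.
by rewrite -setUA cardsU1 cards2 !inE -!shiftK (eq_sym i) (negbTE (shift_ne i)) shift2_ne.
Qed.

End CyclicShift.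

Definition gp_closed_adj (n k : nat) (x c : gp_vertex n) : bool :=
  (x == c) || gp_adj n k x c.
Arguments gp_closed_adj : clear implicits.

Definition gp_side (n : nat) (b : bool) : {set gp_vertex n} := [set x | x.1 == b].
Arguments gp_side : clear implicits.

Lemma U_side n : U n = gp_side n false.
Proof. by apply/setP => x; rewrite !inE eqbF_neg. Qed.

Lemma V_side n : V n = gp_side n true.
Proof. by apply/setP => x; rewrite !inE eqb_id. Qed.

Lemma setD_side n (A : {set gp_vertex n}) b : A :\: gp_side n b = A :&: gp_side n (~~ b).
Proof. by apply/setP => -[c j]; rewrite !inE andbC; case: b; case: c. Qed.

Lemma card_side_pred n b (Q : pred 'I_n) :
  #|[set x in gp_side n b | Q x.2]| = #|[set j | Q j]|.
Proof.
have pair_inj : injective (pair b : 'I_n -> gp_vertex n) by move=> ? ? [].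
rewrite -(card_imset _ pair_inj); apply: eq_card => -[c j]; rewrite !inE /=.
case: (eqVneq c b) => [->|c_ne] /=.
  by rewrite (mem_imset _ _ pair_inj) inE.
by apply/esym/imsetP => -[j' _ [eq_c _]]; rewrite eq_c eqxx in c_ne.
Qed.

Lemma card_side n b : #|gp_side n b| = n.
Proof.
transitivity #|[set j : 'I_n | true]|.
  by rewrite -(card_side_pred b (fun=> true)); apply: eq_card => x; rewrite !inE andbT.
by rewrite -[RHS]card_ord; apply: eq_card => j; rewrite inE.
Qed.

Lemma perfect_code_unique_dominator n k C x :
  perfect_code n k C -> #|[set c in C | gp_closed_adj n k x c]| = 1.
Proof.
case=> indep dom; rewrite /gp_closed_adj.
have [xC|xNC] := boolP (x \in C).
  rewrite -(cards1 x); apply: eq_card => c; rewrite !inE.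
  case: (eqVneq x c) => [<-|x_ne_c]; first by rewrite xC.
  by case cC: (c \in C) => //=; apply/negbTE/indep.
rewrite -(dom x xNC); apply: eq_card => c; rewrite !inE.
by case cC: (c \in C) => //=; case: eqP xNC => // ->; rewrite cC.
Qed.

Section ClosedNeighbourhood.
Variables (n k : nat).
Hypotheses (n_ge3 : 3 <= n) (k_ne0 : k %% n != 0) (k2_ne0 : (2 * k) %% n != 0).

Lemma card_closed_nbhd_side b c :
  #|[set x in gp_side n b | gp_closed_adj n k x c]| = if c \in gp_side n b then 3 else 1.
Proof.
case: c => b' i.
transitivity #|[set j | gp_closed_adj n k (b, j) (b', i)]|.
  by rewrite -(card_side_pred b); apply: eq_card => -[b'' j]; rewrite !inE /=; case: eqP => // ->.
rewrite inE /gp_closed_adj /=; case: (eqVneq b' b) => [->|b_ne].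
  case: b; [rewrite -(@card_cyclic_closed_nbhd n k i) //
           | rewrite -(@card_cyclic_closed_nbhd n 1 i) ?modn_small ?(ltnW n_ge3) //];
    by apply: eq_card => j; rewrite !inE xpair_eqE eqxx /= orbA orbAC.
rewrite -(cards1 i); apply: eq_card => j; rewrite !inE xpair_eqE eq_sym (negbTE b_ne).
by case: b b' b_ne => -[].
Qed.

End ClosedNeighbourhood.

Theorem mainTheorem10 (n : nat) (k : 'I_n) (C : {set gp_vertex n}) :
  3 <= n -> (k : nat) != 0 -> (2 * (k : nat)) %% n != 0 ->
  perfect_code n (k : nat) C ->
  4 * #|C :&: U n| = n /\ 4 * #|C :&: V n| = n /\ n %% 4 = 0.
Proof.
move=> n_ge3 k_ne0 k2_ne0 pc.
have k_mod_ne0 : k %% n != 0 by rewrite modn_small.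
have count b : n = 3 * #|C :&: gp_side n b| + 1 * #|C :&: gp_side n (~~ b)|.
  rewrite -{1}(@card_side n b) -setD_side -sum_if_in.
  rewrite (card_eq_sum_unique_rel (gp_side n b) (fun x => perfect_code_unique_dominator x pc)).
  by apply: eq_bigr => c _; rewrite card_closed_nbhd_side.
have := count false; have := count true; rewrite -U_side -V_side /=.
lia.
Qed.
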